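(* Let $n\ge 2$ and let $\chi$ be a simple game on $N=\{1,\dots,n\}$. For any two voters $i,j\in N$, either $\mathcal{BZ}(\chi,i)=\mathcal{BZ}(\chi,j)$ or $$\left|\mathcal{BZ}(\chi,i)-\mathcal{BZ}(\chi,j)\right|\ge\frac{2}{\left(\lfloor n/2\rfloor+1\right)\binom{n}{\lfloor n/2\rfloor+1}}.$$
   Context: A simple game on $N=\{1,\dots,n\}$ is a monotone Boolean function $\chi:2^N\to\{0,1\}$ (i.e. $\chi(U)\le\chi(U')$ for $U\subseteq U'$) with $\chi(\emptyset)=0$ and $\chi(N)=1$. An $i$-swing is a set $U\subseteq N\setminus\{i\}$ with $\chi(U)=0$ and $\chi(U\cup\{i\})=1$. The Banzhaf index is $\mathcal{BZ}(\chi,i)=\eta_i/m$, where $\eta_i$ is the number of $i$-swings and $m=\sum_{k=1}^n\eta_k$ is the total number of swings. *)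

(* Voters N = {1..n} are modelled by 'I_n (0-indexed). *)
From mathcomp Require Import all_boot all_order all_algebra.
Set Implicit Arguments. Unset Strict Implicit. Unset Printing Implicit Defensive.
Import Order.TTheory GRing.Theory Num.Theory.

Definition simple_game (n : nat) (chi : {set 'I_n} -> bool) : Prop :=
  [/\ forall U V : {set 'I_n}, U \subset V -> chi U <= chi V,
      chi set0 = false & chi setT = true].

Definition swings (n : nat) (chi : {set 'I_n} -> bool) (i : 'I_n) : {set {set 'I_n}} :=
  [set U : {set 'I_n} | [&& i \notin U, ~~ chi U & chi (i |: U)]].

Definition eta (n : nat) (chi : {set 'I_n} -> bool) (i : 'I_n) : nat :=
  #|swings chi i|.

Definition total_swings (n : nat) (chi : {set 'I_n} -> bool) : nat :=
  \sum_(k < n) eta chi k.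

Definition banzhaf (n : nat) (chi : {set 'I_n} -> bool) (i : 'I_n) : rat :=
  ((eta chi i)%:R / (total_swings chi)%:R)%R.

From mathcomp Require Import all_boot all_order all_algebra zify.
Import Order.TTheory GRing.Theory Num.Theory.

(* Write A_i (resp. B_i) for the number of winning coalitions that contain
   (resp. avoid) voter i.  By monotonicity, U |-> i |: U maps the i-swings
   together with the winning coalitions avoiding i bijectively onto the
   winning coalitions containing i, so eta_i = A_i - B_i = |winning| - 2 B_i.
   Hence all swing counts have the same parity, and distinct ones differ
   by at least 2.  Summing eta_i = A_i - B_i over i and double counting gives
   m = sum_{W winning} (2|W| - n) <= sum_{|W| > n/2} (2|W| - n), and grouping
   coalitions by size and telescoping yields the classical identity
   sum_w C(n,w) (2w - n)^+ = (floor(n/2)+1) C(n, floor(n/2)+1).  Finally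
   |eta_i/m - eta_j/m| >= 2/m >= 2/((floor(n/2)+1) C(n, floor(n/2)+1)). *)

Lemma card_as_sum {T : finType} (P Q : pred T) :
  #|[set x | P x & Q x]| = \sum_(x | P x) (Q x : nat).
Proof.
rewrite -sum1_card big_mkcond [RHS]big_mkcond /=.
by apply: eq_bigr => x _; rewrite inE; case: (P x); case: (Q x).
Qed.

Lemma sum_card_incidence n (P : pred {set 'I_n}) (f : {set 'I_n} -> {set 'I_n}) :
  \sum_(i < n) #|[set W | P W & i \in f W]| = \sum_(W | P W) #|f W|.
Proof.
under [LHS]eq_bigr => i _ do rewrite (card_as_sum P (fun W => i \in f W)).
rewrite exchange_big; apply: eq_bigr => W _.
by rewrite -(card_as_sum predT); apply: eq_card => i; rewrite inE.
Qed.

(* Swing counts of a monotone game. *)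
Section MonotoneGame.
Context {n : nat} {chi : {set 'I_n} -> bool}.
Hypothesis chi_mono : forall U V : {set 'I_n}, U \subset V -> chi U <= chi V.

Definition winning := [set W : {set 'I_n} | chi W].
Definition winning_with (i : 'I_n) := [set W : {set 'I_n} | chi W & i \in W].
Definition winning_without (i : 'I_n) := [set W : {set 'I_n} | chi W & i \notin W].

Lemma winning_split i : #|winning_with i| + #|winning_without i| = #|winning|.
Proof.
rewrite -(cardsID [set W : {set 'I_n} | i \in W] winning).
by congr (_ + _); apply: eq_card => W; rewrite !inE andbC.
Qed.

(* eta_i + B_i = A_i: the coalitions U avoiding i with i |: U winning are in
   bijection with the winning coalitions containing i, and split into the
   i-swings (U losing) and the winning coalitions avoiding i (U winning,
   which forces i |: U winning by monotonicity). *)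
Lemma swings_add_winning_without i : eta chi i + #|winning_without i| = #|winning_with i|.
Proof.
pose lifts := [set U : {set 'I_n} | (i \notin U) && chi (i |: U)].
have -> : eta chi i = #|lifts :\: winning|.
  by apply: eq_card => U; rewrite !inE andbCA.
have -> : winning_without i = lifts :&: winning.
  apply/setP => U; rewrite !inE.
  have := chi_mono _ _ (subsetUr [set i] U).
  by case: (chi U); case: (i \in U); case: (chi (i |: U)).
have -> : winning_with i = [set i |: U | U in lifts].
  apply/setP => W; rewrite inE; apply/andP/imsetP => [[chiW iW] | [U]].
    by exists (W :\ i); rewrite ?inE ?eqxx /= setD1K.
  by rewrite inE => /andP[_ chiU] ->; rewrite setU11.
rewrite addnC cardsID card_in_imset // => U V; rewrite !inE.
by move=> /andP[iNU _] /andP[iNV _] eqUV; rewrite -(setU1K iNU) -(setU1K iNV) eqUV.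
Qed.

Lemma swings_parity i : eta chi i + 2 * #|winning_without i| = #|winning|.
Proof. by rewrite -(winning_split i) -swings_add_winning_without mul2n -addnn addnA. Qed.

Lemma swings_gap i j : eta chi i < eta chi j -> eta chi i + 2 <= eta chi j.
Proof. by have := swings_parity i; have := swings_parity j; lia. Qed.

(* Summing eta_i = A_i - B_i over all voters: m = sum_{W winning} (|W| - |~W|),
   bounded by the sum of the truncated differences 2|W| - n. *)
Lemma total_swings_bound : total_swings chi <= \sum_(W | chi W) (2 * #|W| - n).
Proof.
have incidence : total_swings chi + \sum_(W | chi W) #|~: W| = \sum_(W | chi W) #|W|.
  rewrite -!sum_card_incidence -big_split /=; apply: eq_bigr => i _.
  rewrite /= -[RHS](swings_add_winning_without i); congr (_ + _).
  by apply: eq_card => W; rewrite !inE.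
rewrite -(leq_add2r (\sum_(W | chi W) #|~: W|)) incidence -big_split /=.
apply: leq_sum => W _; have := cardsC W; rewrite card_ord.
by move: #|W| #|~: W| => w c; lia.
Qed.
End MonotoneGame.

Lemma sum_by_card n (F : nat -> nat) :
  \sum_(W : {set 'I_n}) F #|W| = \sum_(w < n.+1) 'C(n, w) * F w.
Proof.
rewrite (partition_big (fun W : {set 'I_n} => (inord #|W| : 'I_n.+1)) predT) //=.
apply: eq_bigr => w _.
have inord_cardE : forall W : {set 'I_n}, (inord #|W| == w :> 'I_n.+1) = (#|W| == w).
  move=> W; have := max_card W; rewrite card_ord => h.
  by rewrite -(inj_eq val_inj) /= inordK.
under eq_bigl do rewrite inord_cardE.
rewrite (eq_bigr (fun _ => F w)); last by move=> W /eqP ->.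
rewrite sum_nat_const; have := card_draws ('I_n) w; rewrite card_ord => <-.
congr (_ * _); apply: eq_card => W; by rewrite inE.
Qed.

(* Telescoping for a nonincreasing sequence of naturals (the library version
   telescope_sumn_in covers the nondecreasing case, to which we reduce). *)
Lemma telescope_sumn_nonincr m p (a : nat -> nat) : m <= p ->
    (forall w, m <= w < p -> a w.+1 <= a w) ->
  \sum_(m <= w < p) (a w - a w.+1) = a m - a p.
Proof.
move=> mp a_nonincr; rewrite big_nat_rev /=.
under eq_big_nat => w /andP[mw wp].
  rewrite (_ : (m + p - w.+1).+1 = m + p - w); last by lia.
over.
rewrite (telescope_sumn_in (f := fun t => a (m + p - t))) //.
  by rewrite addnK addKn.
move=> w /andP[mw wp]; rewrite -[m + p - w](_ : (m + p - w.+1).+1 = _); last by lia.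
by apply: a_nonincr; lia.
Qed.

(* With a(w) = n C(n-1, w) = (w+1) C(n, w+1), the weighted binomial term
   C(n, w+1) (2(w+1) - n) is the truncated difference a(w) - a(w+1). *)
Lemma binomial_swing_term n w :
  n * 'C(n.-1, w) - n * 'C(n.-1, w.+1) = 'C(n, w.+1) * (2 * w.+1 - n).
Proof.
rewrite mul_bin_diag mul_bin_down -mulnBl mulnC.
have [w_lt_n | n_le_w] := ltnP w n; last by rewrite bin_small ?mul0n.
by congr (_ * _); lia.
Qed.

(* sum_w C(n,w) (2w - n)^+ = (floor(n/2)+1) C(n, floor(n/2)+1): the terms with
   w <= n/2 vanish and the others telescope, a being nonincreasing there. *)
Lemma binomial_weighted_sum n :
  \sum_(w < n.+1) 'C(n, w) * (2 * w - n) = (n./2).+1 * 'C(n, (n./2).+1).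
Proof.
pose a w := n * 'C(n.-1, w).
have half_le : n./2 <= n by rewrite -divn2 leq_div.
rewrite -(big_mkord xpredT (fun w => 'C(n, w) * (2 * w - n))).
rewrite (big_cat_nat (n := (n./2).+1)) //=.
rewrite big_nat big1 ?add0n => [|w /andP[_ hw]]; last first.
  by rewrite (_ : 2 * w - n = 0) ?muln0 //; rewrite -divn2 in hw; lia.
rewrite -[in X in \sum_(X <= _ < _) _]addn1 -[n.+1]addn1 big_addn addnK.
under eq_bigr => w _ do rewrite addn1 -binomial_swing_term.
have a_n : a n = 0 by rewrite /a; case: (n) => // k; rewrite bin_small ?muln0.
rewrite (telescope_sumn_nonincr _ _ a half_le) => [|w /andP[hw _]].
  by rewrite a_n subn0 /a mul_bin_diag.
rewrite /a mul_bin_down mul_bin_diag leq_mul2r; apply/orP; right.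
rewrite -divn2 in hw; lia.
Qed.

Local Open Scope ring_scope.

Lemma ratio_gap (F : numFieldType) (a b m B : nat) :
  (a + 2 <= b)%N -> (0 < m)%N -> (m <= B)%N ->
  2%:R / B%:R <= `|a%:R / m%:R - b%:R / m%:R : F|.
Proof.
move=> gap_ab m_gt0 le_mB.
have a_le_b : (a <= b)%N by lia.
rewrite distrC -mulrBl -natrB // normrM normr_nat ger0_norm ?invr_ge0 ?ler0n //.
apply: (@le_trans _ _ (2%:R / m%:R)).
  rewrite ler_wpM2l ?ler0n // lef_pV2 ?posrE ?ltr0n ?ler_nat //.
  exact: leq_trans le_mB.
by rewrite ler_wpM2r ?invr_ge0 ?ler0n // ler_nat leq_subRL.
Qed.

Theorem mainTheorem6 (n : nat) (chi : {set 'I_n} -> bool)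
  (hn : (2 <= n)%N) (hchi : simple_game chi) (i j : 'I_n) :
  banzhaf chi i = banzhaf chi j \/
  2%:R / (((n./2).+1 * 'C(n, (n./2).+1))%N)%:R <= `|banzhaf chi i - banzhaf chi j|.
Proof.
have [chi_mono _ _] := hchi.
have swings_le : (total_swings chi <= (n./2).+1 * 'C(n, (n./2).+1))%N.
  rewrite -binomial_weighted_sum -(sum_by_card n (fun w => 2 * w - n)%N).
  rewrite (leq_trans (total_swings_bound chi_mono)) //.
  by rewrite [X in (_ <= X)%N](bigID chi) /= leq_addr.
have eta_le k : (eta chi k <= total_swings chi)%N.
  by rewrite /total_swings (bigD1 k) //= leq_addr.
have gap k l : (eta chi k < eta chi l)%N ->
    2%:R / (((n./2).+1 * 'C(n, (n./2).+1))%N)%:R <= `|banzhaf chi k - banzhaf chi l|.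
  move=> lt_kl; apply: ratio_gap; first exact: swings_gap.
    by have := eta_le l; lia.
  exact: swings_le.
case: (ltngtP (eta chi i) (eta chi j)) => [lt_ij | lt_ji | eq_ij].
- by right; apply: gap.
- by right; rewrite distrC; apply: gap.
- by left; rewrite /banzhaf eq_ij.
Qed.
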